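(* Let $D$ be an integral domain with field of fractions $K$ and let $A$ be a $D$-algebra with standard assumptions. Assume that $A$ is an integral $D$-algebra of bounded degree. Then $\textnormal{Int}_K(A)\neq D[X]$ if and only if $\textnormal{Int}(D)\neq D[X]$. In particular, if $A$ is finitely generated as a $D$-module, then $\textnormal{Int}_K(A)\neq D[X]$ if and only if $\textnormal{Int}(D)\neq D[X]$.
   Context: A $D$-algebra $A$ (not necessarily commutative) satisfies the standard assumptions if it is torsion-free as a $D$-module and $A\cap K = D$, where $A$ and $K$ are identified with their images in $B=K\otimes_D A$. Polynomials in $K[X]$ are evaluated at elements of $A$ inside $B$. $\textnormal{Int}_K(A)=\{f\in K[X]\mid f(A)\subseteq A\}$ and $\textnormal{Int}(D)=\{f\in K[X]\mid f(D)\subseteq D\}$. $A$ is an integral algebra of bounded degree if there is $n$ such that every element of $A$ satisfies a monic polynomial in $D[X]$ of degree at most $n$. *)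

From HB Require Import structures.
From mathcomp Require Import all_boot all_order all_algebra.
Set Implicit Arguments. Unset Strict Implicit. Unset Printing Implicit Defensive.
Import Order.TTheory GRing.Theory Num.Theory.
Local Open Scope ring_scope.

(* K is identified with its image k |-> k%:A in B. *)

Definition is_frac_field (K : fieldType) (D : {pred K}) : Prop :=
  subring_closed D /\
  forall x : K, exists a b, [/\ a \in D, b \in D, b != 0 & x = a / b].

Definition is_D_algebra (K : fieldType) (D : {pred K}) (B : algType K)
  (A : {pred B}) : Prop :=
  subring_closed A /\ (forall d a, d \in D -> a \in A -> d *: a \in A).

(* Standard assumptions, with B playing the role of K (x)_D A:
   the natural map K (x)_D A -> B is an isomorphism (every element of B is
   d^-1 a, d in D \ 0, a in A; injectivity is automatic since A is a subset of
   B, which also gives torsion-freeness), and A \cap K = D. *)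
Definition standard_assumptions (K : fieldType) (D : {pred K}) (B : algType K)
  (A : {pred B}) : Prop :=
  (forall b : B, exists d a, [/\ d \in D, d != 0, a \in A & b = d^-1 *: a]) /\
  (forall k : K, (k%:A \in A) <-> (k \in D)).

Definition evalB (K : fieldType) (B : algType K) (f : {poly K}) (b : B) : B :=
  (map_poly (in_alg B) f).[b].

Definition IntK (K : fieldType) (B : algType K) (A : {pred B}) (f : {poly K}) : Prop :=
  forall a, a \in A -> evalB f a \in A.

Definition IntD (K : fieldType) (D : {pred K}) (f : {poly K}) : Prop :=
  forall d, d \in D -> f.[d] \in D.

Definition DX (K : fieldType) (D : {pred K}) (f : {poly K}) : Prop :=
  f \is a polyOver D.

Definition integral_bounded_degree (K : fieldType) (D : {pred K}) (B : algType K)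
  (A : {pred B}) : Prop :=
  exists n : nat, forall a, a \in A ->
    exists p : {poly K}, [/\ p \is monic, p \is a polyOver D,
                            (size p <= n.+1)%N & evalB p a = 0].

Definition fin_gen_D_module (K : fieldType) (D : {pred K}) (B : algType K)
  (A : {pred B}) : Prop :=
  exists s : seq B, all (fun x => x \in A) s /\
    forall a, a \in A -> exists c : 'I_(size s) -> K,
      (forall i, c i \in D) /\ a = \sum_(i < size s) c i *: s`_i.

From HB Require Import structures.
From mathcomp Require Import all_boot all_order all_algebra ring zify.
From Stdlib Require Import Classical.
Import GRing.Theory.
Local Open Scope ring_scope.

(* Int_K(A) is contained in Int(D) because A meets K in D.  Conversely, take
   f in Int(D) outside D[X]; a descent on the degree yields u outside D and
   j < k with u (t^k - t^j) in D for every t in D.  Let a in A satisfy a monic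
   relation of degree n + 1 with coefficients c_0, ..., c_n in D.  Modulo A,
   multiplication by a maps the finitely many elements u c^al a^r (al an
   exponent vector with entries below k, r <= n) into their D-span: the power
   a^(n+1) is rewritten with the relation, and an exponent reaching k is
   replaced by j.  The coefficient matrix has entries in {0, 1, -1} and depends
   only on j, k and n, not on a, so by the determinant trick u chi(a) lies in A
   for one monic polynomial chi, and u chi is in Int_K(A) but not in D[X].  A
   finitely generated D-module is integral of bounded degree, again by the
   determinant trick. *)

Lemma not_all_iff_subset {T : Type} {P Q : T -> Prop} :
  (forall x, Q x -> P x) -> ~ (forall x, P x <-> Q x) <-> exists x, P x /\ ~ Q x.
Proof.
move=> QP; split=> [nPQ | [x [Px nQx]] PQ]; last exact/nQx/PQ.
apply: NNPP => nx; apply: nPQ => x; split=> [Px | /QP //].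
by apply: NNPP => nQx; apply: nx; exists x.
Qed.

Section PolyAlgebra.
Set Implicit Arguments. Unset Strict Implicit.
Variables (R : comNzRingType) (B : algType R).

Lemma det_mxOver (S : subringClosed R) m (M : 'M[R]_m) :
  M \is a mxOver S -> \det M \in S.
Proof.
move=> /mxOverP SM; rewrite /determinant rpred_sum // => s _.
by rewrite rpredM ?rpredX ?rpredN ?rpred1 // rpred_prod.
Qed.

Lemma adj_mxOver (S : subringClosed R) m (M : 'M[R]_m) :
  M \is a mxOver S -> \adj M \is a mxOver S.
Proof.
move=> /mxOverP SM; apply/mxOverP => i j.
rewrite mxE /cofactor rpredM ?rpredX ?rpredN ?rpred1 //.
by apply: det_mxOver; apply/mxOverP => k l; rewrite !mxE.
Qed.

Lemma horner_char_poly_mul m (M : 'M[R]_m) (a : B) (v : 'I_m -> B) i :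
  horner_alg a (char_poly M) * v i =
  \sum_j horner_alg a (\adj (char_poly_mx M) i j) * (a * v j - \sum_l M j l *: v l).
Proof.
set Q := char_poly_mx M.
have Qv j : a * v j - \sum_l M j l *: v l = \sum_l horner_alg a (Q j l) * v l.
  under [RHS]eq_bigr => l _.
    rewrite /Q /char_poly_mx !mxE rmorphB rmorphMn /= horner_algX horner_algC.
    rewrite mulrBl mulr_algl mulrnAl.
  over.
  rewrite sumrB; congr (_ - _).
  rewrite (bigD1 j) //= big1 ?eqxx ?addr0 // => l /negbTE.
  by rewrite eq_sym => ->.
have adjQ l : \sum_j horner_alg a (\adj Q i j) * horner_alg a (Q j l) =
              horner_alg a (char_poly M) *+ (i == l).
  rewrite -rmorphMn /=.
  have -> : char_poly M *+ (i == l) = (\adj Q *m Q) i l by rewrite mul_adj_mx mxE.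
  by rewrite mxE rmorph_sum; apply: eq_bigr => j _; rewrite rmorphM.
under eq_bigr => j _ do rewrite Qv mulr_sumr.
rewrite exchange_big /=.
under eq_bigr => l _ do rewrite (eq_bigr _ (fun j _ => mulrA _ _ _)) -mulr_suml adjQ.
rewrite (bigD1 i) //= eqxx mulr1n big1 ?addr0 // => l.
by rewrite eq_sym => /negbTE ->; rewrite mulr0n mul0r.
Qed.

Lemma horner_alg_coef (p : {poly R}) (a : B) :
  horner_alg a p = \sum_(i < size p) p`_i *: a ^+ i.
Proof.
rewrite [LHS]/horner_alg /horner_morph (horner_coef_wide _ (size_poly _ _)).
by apply: eq_bigr => i _; rewrite coef_map mulr_algl.
Qed.

Lemma monic_root_relation (p : {poly R}) (a : B) n :
  p \is monic -> (size p <= n.+1)%N -> horner_alg a p = 0 ->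
  a ^+ n.+1 = - \sum_(l < n.+1) (p * 'X^(n.+2 - size p))`_l *: a ^+ l.
Proof.
move=> mon_p le_pn pa0; set q := p * _.
have size_q : size q = n.+2.
  rewrite size_monicM ?monic_neq0 ?monicXn // size_polyXn.
  have : (0 < size p)%N by rewrite size_poly_gt0 monic_neq0.
  by move: le_pn; lia.
have lead_q : q`_n.+1 = 1.
  have /monicP : q \is monic by rewrite monicMr ?monicXn.
  by rewrite /lead_coef size_q.
have /eqP : horner_alg a q = 0 by rewrite rmorphM /= pa0 mul0r.
rewrite horner_alg_coef size_q big_ord_recr /= lead_q scale1r addrC addr_eq0.
by move=> /eqP ->.
Qed.

End PolyAlgebra.

Section IntegerValued.
Set Implicit Arguments. Unset Strict Implicit.
Variables (K : fieldType) (D : {pred K}).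
Hypothesis subringD : subring_closed D.
HB.instance Definition _ := GRing.isSubringClosed.Build K D subringD.

Lemma DX_IntD f : DX D f -> IntD D f.
Proof. by move=> Df d Dd; rewrite rpred_horner. Qed.

Definition dilate_diff (f : {poly K}) (t : K) : {poly K} :=
  \poly_(i < (size f).-1) (f`_i * (t ^+ i - t ^+ (size f).-1)).

Lemma horner_dilate_diff f t x :
  (dilate_diff f t).[x] = f.[t * x] - t ^+ (size f).-1 * f.[x].
Proof.
set k := (size f).-1.
have hf y : f.[y] = \sum_(i < k) f`_i * y ^+ i + f`_k * y ^+ k.
  by rewrite (horner_coef_wide _ (leqSpred _)) big_ord_recr.
rewrite horner_poly !hf.
have -> : \sum_(i < k) f`_i * (t ^+ i - t ^+ k) * x ^+ i =
    \sum_(i < k) f`_i * (t * x) ^+ i - t ^+ k * \sum_(i < k) f`_i * x ^+ i.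
  by rewrite mulr_sumr -sumrB; apply: eq_bigr => i _; rewrite exprMn; ring.
by rewrite exprMn; ring.
Qed.

Lemma size_dilate_diff f t : f != 0 -> (size (dilate_diff f t) < size f)%N.
Proof.
by move=> nz_f; apply: leq_ltn_trans (size_poly _ _) _; rewrite ltn_predL size_poly_gt0.
Qed.

Lemma IntD_dilate_diff f t : IntD D f -> t \in D -> IntD D (dilate_diff f t).
Proof.
by move=> Df Dt d Dd; rewrite horner_dilate_diff rpredB ?rpredM ?rpredX ?Df ?rpredM.
Qed.

(* The degree of f(tX) - t^k f(X) drops; once all these lie in D[X] for t in D,
   their coefficients f_i (t^i - t^k) provide the witness. *)
Lemma IntD_witness f : IntD D f -> ~ DX D f ->
  exists u (j k : nat), [/\ u \notin D, (j < k)%N &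
    forall t, t \in D -> u * (t ^+ k - t ^+ j) \in D].
Proof.
have [S] := ubnP (size f); elim: S f => // S IH f lt_fS Df nDf.
have nz_f : f != 0 by apply: contra_notN nDf => /eqP ->; rewrite /DX rpred0.
set k := (size f).-1.
have [[t [Dt nDg]] | Dg] := classic (exists t, t \in D /\ ~ DX D (dilate_diff f t)).
  apply: (IH (dilate_diff f t)) (IntD_dilate_diff Df Dt) nDg.
  exact: leq_trans (size_dilate_diff t nz_f) _.
have Dcoef t i : t \in D -> (i < k)%N -> f`_i * (t ^+ i - t ^+ k) \in D.
  move=> Dt lt_ik; apply/negbNE/negP => nD; apply: Dg; exists t; split=> //.
  by move=> /polyOverP/(_ i); rewrite coef_poly lt_ik (negbTE nD).
have [[i nDfi] | Dlow] := pickP (fun i : 'I_k => f`_i \notin D).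
  exists f`_i, i, k; split=> // t Dt.
  by rewrite -opprB mulrN rpredN Dcoef.
have {}Dlow i : (i < k)%N -> f`_i \in D.
  by move=> lt_ik; have := Dlow (Ordinal lt_ik); rewrite /= => /negbFE.
case: nDf; apply/polyOverP => i.
case: (ltngtP i k) => [/Dlow // | lt_ki | ->].
  by rewrite nth_default ?rpred0 //; move: lt_ki; rewrite /k; case: (size f).
have := Df 1 (rpred1 _); rewrite (horner_coef_wide _ (leqSpred _)) big_ord_recr /= expr1n mulr1.
rewrite -/k => Df1; rewrite -(addKr (\sum_(i < k) f`_i * 1 ^+ i) f`_k) rpredD ?rpredN //.
by rewrite rpred_sum // => l _; rewrite expr1n mulr1 Dlow.
Qed.

Section Algebra.
Variables (B : algType K) (A : {pred B}).
Hypothesis subringA : subring_closed A.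
Hypothesis scaleA : forall d a, d \in D -> a \in A -> d *: a \in A.
Hypothesis scalarA : forall k, (k%:A \in A) <-> (k \in D).
HB.instance Definition _ := GRing.isSubringClosed.Build B A subringA.

Lemma horner_alg_polyOver (f : {poly K}) a :
  f \is a polyOver D -> a \in A -> horner_alg a f \in A.
Proof.
move=> /polyOverP Df Aa; rewrite horner_alg_coef rpred_sum // => i _.
by rewrite scaleA // rpredX.
Qed.

Lemma DX_IntK f : DX D f -> IntK A f.
Proof. by move=> Df a; apply: horner_alg_polyOver. Qed.

Lemma IntK_IntD f : IntK A f -> IntD D f.
Proof.
move=> Af d /scalarA Ad; apply/scalarA; have := Af _ Ad.
by rewrite /evalB -[d%:A]/(in_alg B d) horner_map.
Qed.

Lemma fin_gen_bounded_degree : fin_gen_D_module D A -> integral_bounded_degree D A.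
Proof.
move=> [s [As span_s]]; exists (size s) => a Aa.
have As_i (i : 'I_(size s)) : s`_i \in A by apply: (allP As); rewrite mem_nth.
have /fin_all_exists [C DC] : forall i : 'I_(size s), exists r : 'rV[K]_(size s),
    (forall l, r 0 l \in D) /\ a * s`_i = \sum_l r 0 l *: s`_l.
  move=> i; have [r [Dr ->]] := span_s _ (rpredM Aa (As_i i)).
  by exists (\row_l r l); split=> [l|]; rewrite ?mxE //; apply: eq_bigr => l _; rewrite mxE.
pose M : 'M[K]_(size s) := \matrix_(i, l) C i 0 l.
have char_s (i : 'I_(size s)) : horner_alg a (char_poly M) * s`_i = 0.
  rewrite (horner_char_poly_mul M a (fun l => s`_l) i) big1 // => l _.
  rewrite (proj2 (DC l)) /M.
  under [X in _ - X]eq_bigr => m _ do rewrite mxE.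
  by rewrite subrr mulr0.
exists (char_poly M); split; first exact: char_poly_monic.
- apply: det_mxOver; apply/mxOverP => i l; rewrite !mxE rpredB ?rpredMn ?polyOverX //.
  by rewrite polyOverC (proj1 (DC i)).
- by rewrite size_char_poly.
have [e [_ one_e]] := span_s 1 (rpred1 _).
rewrite -[evalB _ _]mulr1 [X in _ * X]one_e mulr_sumr big1 // => i _.
by rewrite -scalerAr char_s scaler0.
Qed.

Section ScaledCharPoly.
Variables (u : K) (j k n : nat).
Hypothesis lt_jk : (j < k.+1)%N.
Hypothesis Du : forall t, t \in D -> u * (t ^+ k.+1 - t ^+ j) \in D.

Definition exponent := {ffun 'I_n.+1 -> 'I_k.+1}.
Definition gen_index := (exponent * 'I_n.+1)%type.

(* Exponent k + 1 wraps around to j, harmless modulo A as u (t^(k+1) - t^j) is in D. *)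
Definition next_exp (e : 'I_k.+1) : 'I_k.+1 :=
  if (e.+1 < k.+1)%N then inord e.+1 else inord j.

Definition bump_exp (al : exponent) (s : 'I_n.+1) : exponent :=
  [ffun l => if l == s then next_exp (al s) else al l].

Definition shift_coef (x y : gen_index) : K :=
  if (x.2.+1 < n.+1)%N then ((y.1 == x.1) && (y.2 == x.2.+1 :> nat))%:R
  else - (y.1 == bump_exp x.1 y.2)%:R.

Definition shift_mx : 'M[K]_#|{: gen_index}| :=
  \matrix_(i, i') shift_coef (enum_val i) (enum_val i').

Lemma shift_coef_in x y : shift_coef x y \in D.
Proof. by rewrite /shift_coef; case: ifP => _; rewrite ?rpredN rpredMn ?rpred1. Qed.

Variables (a : B) (c : nat -> K).
Hypothesis Aa : a \in A.
Hypothesis Dc : forall l, c l \in D.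
Hypothesis rel_a : a ^+ n.+1 = - \sum_(l < n.+1) c l *: a ^+ l.

Definition cmonomial (al : exponent) : K := \prod_(l < n.+1) c l ^+ al l.
Definition gen (x : gen_index) : B := (u * cmonomial x.1) *: a ^+ x.2.

Lemma cmonomial_bump_in al s :
  u * cmonomial (bump_exp al s) - u * cmonomial al * c s \in D.
Proof.
rewrite /cmonomial (bigD1 s) //= [X in _ - _ * X * _](bigD1 s) //=.
set P := \prod_(i < n.+1 | i != s) c i ^+ al i.
have -> : \prod_(l < n.+1 | l != s) c l ^+ bump_exp al s l = P.
  by apply: eq_bigr => l /negbTE ls; rewrite ffunE ls.
have DP : P \in D by rewrite rpred_prod // => l _; rewrite rpredX.
rewrite ffunE eqxx /next_exp; case: ifP => lt_alk.
  rewrite inordK // exprS.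
  have -> : u * (c s * c s ^+ al s * P) - u * (c s ^+ al s * P) * c s = 0 by ring.
  exact: rpred0.
have al_s : nat_of_ord (al s) = k by move/negbT: lt_alk; have := ltn_ord (al s); lia.
rewrite inordK // al_s.
have -> : u * (c s ^+ j * P) - u * (c s ^+ k * P) * c s =
          - (P * (u * (c s ^+ k.+1 - c s ^+ j))) by rewrite exprSr; ring.
by rewrite rpredN rpredM // Du.
Qed.

Lemma shift_residue_in x : a * gen x - \sum_y shift_coef x y *: gen y \in A.
Proof.
case: x => al r; rewrite /shift_coef /=.
case lt_rn : (r.+1 < n.+1)%N.
  rewrite (bigD1 (al, Ordinal lt_rn)) //= !eqxx /= scale1r big1 ?addr0; last first.
    move=> [be s] /= ne; case: eqP => [be_al|] /=; last by rewrite scale0r.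
    case: eqP => [s_r|]; last by rewrite scale0r.
    by case/eqP: ne; rewrite be_al; congr pair; apply: val_inj.
  by rewrite /gen /= -scalerAr -exprS subrr rpred0.
have r_n : nat_of_ord r = n by move/negbT: lt_rn; have := ltn_ord r; lia.
rewrite -(pair_bigA _ (fun be s => - (be == bump_exp al s)%:R *: gen (be, s))) /=.
rewrite exchange_big /=.
have -> : \sum_s \sum_be - (be == bump_exp al s)%:R *: gen (be, s) =
          - \sum_(s < n.+1) (u * cmonomial (bump_exp al s)) *: a ^+ s.
  rewrite -sumrN; apply: eq_bigr => s _.
  rewrite (bigD1 (bump_exp al s)) //= big1 ?addr0; first by rewrite eqxx scaleN1r.
  by move=> be /negbTE ->; rewrite scaleNr scale0r oppr0.
rewrite opprK /gen /= -scalerAr -exprS r_n rel_a scalerN scaler_sumr -sumrN -big_split.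
rewrite rpred_sum // => s _ /=.
by rewrite scalerA addrC -scalerBl scaleA ?rpredX ?cmonomial_bump_in.
Qed.

Lemma scaled_char_poly_in : u *: horner_alg a (char_poly shift_mx) \in A.
Proof.
pose x0 : gen_index := ([ffun=> ord0], ord0).
have gen_x0 : gen x0 = u%:A.
  by rewrite /gen /cmonomial big1 ?mulr1 // => l _; rewrite ffunE expr0.
rewrite -mulr_algr -gen_x0 -(enum_rankK x0).
rewrite (horner_char_poly_mul shift_mx a (fun i => gen (enum_val i))).
have Dchar : char_poly_mx shift_mx \is a mxOver (polyOver D).
  apply/mxOverP => i1 i2.
  by rewrite !mxE rpredB ?rpredMn ?polyOverX ?polyOverC ?shift_coef_in.
rewrite rpred_sum // => i _.
rewrite rpredM ?horner_alg_polyOver ?(mxOverP (adj_mxOver Dchar)) //.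
under eq_bigr => i' _ do rewrite mxE.
rewrite -(big_enum_val (fun y => shift_coef (enum_val i) y *: gen y)).
exact: shift_residue_in.
Qed.
End ScaledCharPoly.

Lemma IntD_IntK_nontrivial f : integral_bounded_degree D A -> IntD D f -> ~ DX D f ->
  exists F, IntK A F /\ ~ DX D F.
Proof.
move=> [n bounded] Df nDf.
have [u [j [k [nDu lt_jk Du]]]] := IntD_witness Df nDf.
case: k lt_jk Du => // k lt_jk Du.
exists (u *: char_poly (shift_mx j k n)); split.
  move=> a Aa; have [p [mon_p Dp le_pn pa0]] := bounded a Aa.
  have Dq l : (p * 'X^(n.+2 - size p))`_l \in D.
    by apply/polyOverP; rewrite rpredM ?polyOverXn.
  change (horner_alg a (u *: char_poly (shift_mx j k n)) \in A).
  rewrite linearZ /= mulr_algl.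
  exact: (scaled_char_poly_in (n := n) lt_jk Du Aa Dq (monic_root_relation mon_p le_pn pa0)).
move=> /polyOverP/(_ (size (u *: char_poly (shift_mx j k n))).-1).
by rewrite -/(lead_coef _) lead_coefZ (monicP (char_poly_monic _)) mulr1 (negbTE nDu).
Qed.

End Algebra.
End IntegerValued.

Theorem mainTheorem3 (K : fieldType) (D : {pred K}) (B : algType K) (A : {pred B}) :
  is_frac_field D -> is_D_algebra D A -> standard_assumptions D A ->
  (integral_bounded_degree D A ->
     (~ (forall f : {poly K}, IntK A f <-> DX D f)) <->
     (~ (forall f : {poly K}, IntD D f <-> DX D f))) /\
  (fin_gen_D_module D A ->
     (~ (forall f : {poly K}, IntK A f <-> DX D f)) <->
     (~ (forall f : {poly K}, IntD D f <-> DX D f))).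
Proof.
move=> [subringD _] [subringA scaleA] [_ scalarA].
have bounded_equiv : integral_bounded_degree D A ->
     (~ (forall f : {poly K}, IntK A f <-> DX D f)) <->
     (~ (forall f : {poly K}, IntD D f <-> DX D f)).
  move=> bounded.
  rewrite (not_all_iff_subset (DX_IntK subringD subringA scaleA)).
  rewrite (not_all_iff_subset (DX_IntD subringD)).
  split=> [[f [/(IntK_IntD scalarA) Df nDf]] | [f [Df nDf]]].
    by exists f.
  exact: (IntD_IntK_nontrivial subringD subringA scaleA bounded Df nDf).
split=> [//|fin_gen].
exact: bounded_equiv (fin_gen_bounded_degree subringD subringA fin_gen).
Qed.
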